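(* Assume in addition that, for $i=1,2$, $\phi_i$ is differentiable with $L_{\phi_i}$-Lipschitz continuous gradient ($L_{\phi_i}\ge0$). Let $\beta_1,\beta_2>0$, $\tau\in(0,1)$, and suppose $(\bar x,\bar y)\in X\times\mathbb{R}^m$ satisfies $f(\bar x;\beta_2)\le d(\bar y;\beta_1)$. Set $\beta_1^+:=(1-\tau)\beta_1$, $\beta_2^+:=(1-\tau)\beta_2$, $\hat x:=(1-\tau)\bar x+\tau x^*(\bar y;\beta_1)$, $\bar y^+:=(1-\tau)\bar y+\tau y^*(\hat x;\beta_2^+)$, and $\hat{\bar x}^+:=(G_1(\hat x;\beta_2^+),G_2(\hat x;\beta_2^+))$, where with $\hat L_i^\psi(\beta_2^+):=L_{\phi_i}+\frac{2\|A_i\|^2}{\beta_2^+}$, $$G_i(\hat x;\beta_2^+):=\arg\min_{x_i\in X_i}\Big\{\nabla\phi_i(\hat x_i)^T(x_i-\hat x_i)+y^*(\hat x;\beta_2^+)^TA_i(x_i-\hat x_i)+\frac{\hat L_i^\psi(\beta_2^+)}{2}\|x_i-\hat x_i\|^2\Big\}.$$ If $$\frac{1-\tau}{\tau^2}\beta_1\sigma_i\ge L_{\phi_i}+\frac{2\|A_i\|^2}{(1-\tau)\beta_2},\qquad i=1,2,$$ then $(\hat{\bar x}^+,\bar y^+)\in X\times\mathbb{R}^m$ and $f(\hat{\bar x}^+;\beta_2^+)\le d(\bar y^+;\beta_1^+)$.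
   Context: All spaces carry the Euclidean inner product and norm $\|\cdot\|$; for a matrix, $\|\cdot\|$ is the induced operator norm. For $i=1,2$: $X_i\subset\mathbb{R}^{n_i}$ is nonempty, closed, convex and bounded; $\phi_i:\mathbb{R}^{n_i}\to\mathbb{R}$ is convex; $A_i\in\mathbb{R}^{m\times n_i}$; $b\in\mathbb{R}^m$. Write $x=(x_1,x_2)$, $X=X_1\times X_2$, $A=[A_1,A_2]$ (so $Ax=A_1x_1+A_2x_2$), $\phi(x)=\phi_1(x_1)+\phi_2(x_2)$. For $i=1,2$, $p_i$ is a prox-function of $X_i$: continuous and strongly convex on $X_i$ with convexity parameter $\sigma_i>0$, with prox-center $x_i^c=\arg\min_{x_i\in X_i}p_i(x_i)$ normalized so $p_i(x_i^c)=0$. For $\beta_1>0$, $d(y;\beta_1):=\min_{x\in X}\{\phi(x)+y^T(Ax-b)+\beta_1(p_1(x_1)+p_2(x_2))\}$, whose (unique) minimizer is denoted $x^*(y;\beta_1)$. For $\beta_2>0$, $y^*(x;\beta_2):=\frac{1}{\beta_2}(Ax-b)$ and $f(x;\beta_2):=\phi(x)+\frac{1}{2\beta_2}\|Ax-b\|^2$. *)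

From Stdlib Require Import Reals Lra ClassicalEpsilon.
From Stdlib Require Fin.
Open Scope R_scope.

Definition vec (n : nat) := Fin.t n -> R.
Definition mat (m n : nat) := Fin.t m -> Fin.t n -> R.

Fixpoint vsum (n : nat) : (Fin.t n -> R) -> R :=
  match n return (Fin.t n -> R) -> R with
  | O => fun _ => 0
  | S k => fun f => f Fin.F1 + vsum k (fun i => f (Fin.FS i))
  end.

Definition vzero {n} : vec n := fun _ => 0.
Definition vadd {n} (u v : vec n) : vec n := fun i => u i + v i.
Definition vsub {n} (u v : vec n) : vec n := fun i => u i - v i.
Definition vscale {n} (a : R) (u : vec n) : vec n := fun i => a * u i.
Definition dot {n} (u v : vec n) : R := vsum n (fun i => u i * v i).
Definition vnorm {n} (u : vec n) : R := sqrt (dot u u).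
Definition mv {m n} (A : mat m n) (x : vec n) : vec m :=
  fun i => vsum n (fun j => A i j * x j).

(* Generic argmin over a set (chosen by Hilbert's epsilon; meaningful when a
   minimizer exists, which is the case in all uses below). *)
Definition argmin {T : Type} (inh : inhabited T) (S : T -> Prop) (F : T -> R) : T :=
  epsilon inh (fun x => S x /\ forall z, S z -> F x <= F z).

Definition vinh (n : nat) : inhabited (vec n) := inhabits vzero.

Definition is_opnorm {m n} (A : mat m n) (c : R) : Prop :=
  is_lub (fun r => exists x : vec n, vnorm x <= 1 /\ r = vnorm (mv A x)) c.
Definition opnorm {m n} (A : mat m n) : R := epsilon (inhabits 0) (is_opnorm A).

Definition vnonempty {n} (S : vec n -> Prop) : Prop := exists x, S x.
Definition vconvex_set {n} (S : vec n -> Prop) : Prop :=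
  forall x y t, S x -> S y -> 0 <= t <= 1 ->
    S (vadd (vscale t x) (vscale (1 - t) y)).
Definition vclosed {n} (S : vec n -> Prop) : Prop :=
  forall (u : nat -> vec n) (x : vec n), (forall k, S (u k)) ->
    (forall eps, eps > 0 -> exists N, forall k, (k >= N)%nat -> vnorm (vsub (u k) x) < eps) ->
    S x.
Definition vbounded {n} (S : vec n -> Prop) : Prop :=
  exists M, forall x, S x -> vnorm x <= M.

Definition convex_fun {n} (f : vec n -> R) : Prop :=
  forall x y t, 0 <= t <= 1 ->
    f (vadd (vscale t x) (vscale (1 - t) y)) <= t * f x + (1 - t) * f y.
Definition vcontinuous_on {n} (S : vec n -> Prop) (f : vec n -> R) : Prop :=
  forall x, S x -> forall eps, eps > 0 -> exists delta, delta > 0 /\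
    forall y, S y -> vnorm (vsub y x) < delta -> Rabs (f y - f x) < eps.
Definition strongly_convex_on {n} (S : vec n -> Prop) (sigma : R) (f : vec n -> R) : Prop :=
  forall x y t, S x -> S y -> 0 <= t <= 1 ->
    f (vadd (vscale t x) (vscale (1 - t) y)) <=
      t * f x + (1 - t) * f y - sigma / 2 * t * (1 - t) * (vnorm (vsub x y))^2.
(* p is a prox-function of S with convexity parameter sigma, normalized at its prox-center *)
Definition prox_function {n} (S : vec n -> Prop) (sigma : R) (p : vec n -> R) : Prop :=
  vcontinuous_on S p /\ strongly_convex_on S sigma p /\ p (argmin (vinh n) S p) = 0.
Definition is_gradient {n} (f : vec n -> R) (g : vec n -> vec n) : Prop :=
  forall x eps, eps > 0 -> exists delta, delta > 0 /\
    forall h, vnorm h < delta ->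
      Rabs (f (vadd x h) - f x - dot (g x) h) <= eps * vnorm h.
Definition lipschitz {n} (g : vec n -> vec n) (L : R) : Prop :=
  forall x y, vnorm (vsub (g x) (g y)) <= L * vnorm (vsub x y).

Section Problem.
Context {n1 n2 m : nat}
  (X1 : vec n1 -> Prop) (X2 : vec n2 -> Prop)
  (phi1 : vec n1 -> R) (phi2 : vec n2 -> R)
  (A1 : mat m n1) (A2 : mat m n2) (b : vec m)
  (p1 : vec n1 -> R) (p2 : vec n2 -> R).

Definition Xprod (x : vec n1 * vec n2) : Prop := X1 (fst x) /\ X2 (snd x).
Definition Aop (x : vec n1 * vec n2) : vec m := vadd (mv A1 (fst x)) (mv A2 (snd x)).
Definition phi (x : vec n1 * vec n2) : R := phi1 (fst x) + phi2 (snd x).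
Definition prodinh : inhabited (vec n1 * vec n2) := inhabits (vzero, vzero).

Definition dobj (y : vec m) (beta1 : R) (x : vec n1 * vec n2) : R :=
  phi x + dot y (vsub (Aop x) b) + beta1 * (p1 (fst x) + p2 (snd x)).
Definition xstar (y : vec m) (beta1 : R) : vec n1 * vec n2 :=
  argmin prodinh Xprod (dobj y beta1).
Definition dfun (y : vec m) (beta1 : R) : R := dobj y beta1 (xstar y beta1).
Definition ystar (x : vec n1 * vec n2) (beta2 : R) : vec m :=
  vscale (1 / beta2) (vsub (Aop x) b).
Definition ffun (x : vec n1 * vec n2) (beta2 : R) : R :=
  phi x + 1 / (2 * beta2) * (vnorm (vsub (Aop x) b))^2.
End Problem.

Definition Gblock {n m : nat} (Xi : vec n -> Prop) (gradi : vec n -> vec n)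
  (Ai : mat m n) (Lhat : R) (ys : vec m) (xhi : vec n) : vec n :=
  argmin (vinh n) Xi (fun z =>
    dot (gradi xhi) (vsub z xhi) + dot ys (mv Ai (vsub z xhi))
    + Lhat / 2 * (vnorm (vsub z xhi))^2).

(** Writing h = xhat, w = x^*(ybar+; beta1+), s = x^*(ybar; beta1), the proof
    sandwiches both sides of the new gap around a common quantity
      M = phi(h) + |A h - b|^2 / (2 beta2+) + sum_i T_i,
    where T_i is the value of the i-th block model at the interpolated point
    (1 - tau) xbar_i + tau w_i, with curvature replaced by (1 - tau) beta1 sigma_i.
    - Primal side: by the descent lemma and |A_i d| <= ||A_i|| |d|, f(. ; beta2+)
      is below the sum of the block models of G_i around h; G_i minimizes its
      model, and the step-size condition bounds the model at the interpolated
      point by T_i.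
    - Dual side: d(ybar+; beta1+) is affine in (y, beta) at fixed x; quadratic
      growth of the Lagrangian at s, the gap assumption, convexity of phi_i and
      an exact interpolation identity for the quadratic penalty give M below it. *)

From Stdlib Require Import Reals Lra Lia Psatz ClassicalEpsilon FunctionalExtensionality Classical.
Open Scope R_scope.

Lemma vsum_add n f g : vsum n (fun i => f i + g i) = vsum n f + vsum n g.
Proof.
  induction n as [|n IH]; simpl; [ring|].
  rewrite (IH (fun i => f (Fin.FS i)) (fun i => g (Fin.FS i))). ring.
Qed.

Lemma vsum_scale n c f : vsum n (fun i => c * f i) = c * vsum n f.
Proof.
  induction n as [|n IH]; simpl; [ring|].
  rewrite (IH (fun i => f (Fin.FS i))). ring.
Qed.

Lemma vsum_le n f g : (forall i, f i <= g i) -> vsum n f <= vsum n g.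
Proof.
  induction n as [|n IH]; simpl; intros H; [lra|].
  pose proof (IH (fun i => f (Fin.FS i)) (fun i => g (Fin.FS i)) (fun i => H (Fin.FS i))).
  pose proof (H Fin.F1). lra.
Qed.

Lemma vsum_zero n : vsum n (fun _ => 0) = 0.
Proof. induction n as [|n IH]; simpl; [ring|]. rewrite IH. ring. Qed.

Lemma vsum_nonneg n f : (forall i, 0 <= f i) -> 0 <= vsum n f.
Proof. intros H. rewrite <- (vsum_zero n). now apply vsum_le. Qed.

Lemma vsum_term n (i : Fin.t n) : forall f, (forall j, 0 <= f j) -> f i <= vsum n f.
Proof.
  induction i as [n|n i IH]; intros f Hf; simpl.
  - pose proof (vsum_nonneg n (fun j => f (Fin.FS j)) (fun j => Hf _)). lra.
  - pose proof (IH (fun j => f (Fin.FS j)) (fun j => Hf _)). pose proof (Hf Fin.F1). lra.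
Qed.

Lemma dot_comm {n} (u v : vec n) : dot u v = dot v u.
Proof. unfold dot. f_equal. extensionality i. ring. Qed.

Lemma dot_add_l {n} (u v w : vec n) : dot (vadd u v) w = dot u w + dot v w.
Proof. unfold dot, vadd. rewrite <- vsum_add. f_equal. extensionality i. ring. Qed.

Lemma dot_add_r {n} (u v w : vec n) : dot w (vadd u v) = dot w u + dot w v.
Proof. rewrite !(dot_comm w). apply dot_add_l. Qed.

Lemma dot_scale_l {n} c (u w : vec n) : dot (vscale c u) w = c * dot u w.
Proof. unfold dot, vscale. rewrite <- vsum_scale. f_equal. extensionality i. ring. Qed.

Lemma dot_scale_r {n} c (u w : vec n) : dot w (vscale c u) = c * dot w u.
Proof. rewrite !(dot_comm w). apply dot_scale_l. Qed.

Lemma vsub_as_add {n} (u v : vec n) : vsub u v = vadd u (vscale (-1) v).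
Proof. extensionality i. unfold vsub, vadd, vscale. ring. Qed.

Lemma dot_sub_l {n} (u v w : vec n) : dot (vsub u v) w = dot u w - dot v w.
Proof. rewrite vsub_as_add, dot_add_l, dot_scale_l. ring. Qed.

Lemma dot_sub_r {n} (u v w : vec n) : dot w (vsub u v) = dot w u - dot w v.
Proof. rewrite !(dot_comm w). apply dot_sub_l. Qed.

Lemma dot_nonneg {n} (u : vec n) : 0 <= dot u u.
Proof. apply vsum_nonneg. intros i. nra. Qed.

Lemma mv_add {m n} (A : mat m n) u v : mv A (vadd u v) = vadd (mv A u) (mv A v).
Proof.
  extensionality i. unfold mv, vadd. rewrite <- vsum_add. f_equal. extensionality j. ring.
Qed.

Lemma mv_scale {m n} (A : mat m n) c u : mv A (vscale c u) = vscale c (mv A u).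
Proof.
  extensionality i. unfold mv, vscale. rewrite <- vsum_scale. f_equal. extensionality j. ring.
Qed.

Lemma mv_sub {m n} (A : mat m n) u v : mv A (vsub u v) = vsub (mv A u) (mv A v).
Proof. rewrite !vsub_as_add, mv_add, mv_scale. reflexivity. Qed.

Lemma vnorm_nonneg {n} (u : vec n) : 0 <= vnorm u.
Proof. apply sqrt_pos. Qed.

Lemma vnorm_sq {n} (u : vec n) : vnorm u ^ 2 = dot u u.
Proof. apply pow2_sqrt, dot_nonneg. Qed.

Lemma vnorm_zero n : vnorm (@vzero n) = 0.
Proof.
  unfold vnorm, dot, vzero.
  replace (fun _ : Fin.t n => 0 * 0) with (fun _ : Fin.t n => 0) by (extensionality i; ring).
  rewrite vsum_zero. apply sqrt_0.
Qed.

Lemma abs_le_between x a : Rabs x <= a -> - a <= x <= a.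
Proof.
  intros H. pose proof (Rle_abs x). pose proof (Rle_abs (- x)). rewrite Rabs_Ropp in *. lra.
Qed.

Lemma sq_le_le a b : 0 <= a -> 0 <= b -> a ^ 2 <= b ^ 2 -> a <= b.
Proof. intros. destruct (Rle_or_lt a b); auto. nra. Qed.

Lemma sq_eq a b : 0 <= a -> 0 <= b -> a ^ 2 = b ^ 2 -> a = b.
Proof. intros. apply Rle_antisym; apply sq_le_le; lra. Qed.

(* Cauchy-Schwarz, squared form: the quadratic t |-> |u + t v|^2 is nonnegative,
   so its discriminant is nonpositive. *)
Lemma cauchy_schwarz_sq {n} (u v : vec n) : dot u v ^ 2 <= dot u u * dot v v.
Proof.
  assert (Hquad : forall t, 0 <= dot u u + 2 * t * dot u v + t ^ 2 * dot v v).
  { intros t. pose proof (dot_nonneg (vadd u (vscale t v))) as H.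
    rewrite !dot_add_l, !dot_add_r, !dot_scale_l, !dot_scale_r, (dot_comm v u) in H. nra. }
  pose proof (dot_nonneg u). pose proof (dot_nonneg v).
  destruct (Req_dec (dot v v) 0) as [Hv|Hv].
  - destruct (Req_dec (dot u v) 0) as [Huv|Huv]; [rewrite Hv, Huv; nra|].
    specialize (Hquad (- (dot u u + 1) / (2 * dot u v))). rewrite Hv in Hquad.
    assert (2 * (- (dot u u + 1) / (2 * dot u v)) * dot u v = - (dot u u + 1)) by (field; auto).
    nra.
  - specialize (Hquad (- dot u v / dot v v)).
    replace (dot u u + 2 * (- dot u v / dot v v) * dot u v + (- dot u v / dot v v) ^ 2 * dot v v)
      with ((dot u u * dot v v - dot u v ^ 2) / dot v v) in Hquad by (field; auto).
    assert (Hpos : 0 < dot v v) by lra.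
    apply Rmult_le_compat_r with (r := dot v v) in Hquad; [|lra].
    unfold Rdiv in Hquad. rewrite Rmult_assoc, Rinv_l, Rmult_1_r, Rmult_0_l in Hquad; lra.
Qed.

Lemma cauchy_schwarz {n} (u v : vec n) : Rabs (dot u v) <= vnorm u * vnorm v.
Proof.
  pose proof (vnorm_nonneg u). pose proof (vnorm_nonneg v).
  apply sq_le_le; [apply Rabs_pos | nra|].
  rewrite pow2_abs, Rpow_mult_distr, !vnorm_sq. apply cauchy_schwarz_sq.
Qed.

Lemma vnorm_scale {n} c (u : vec n) : vnorm (vscale c u) = Rabs c * vnorm u.
Proof.
  pose proof (Rabs_pos c). pose proof (vnorm_nonneg u).
  apply sq_eq; [apply vnorm_nonneg | nra|].
  rewrite Rpow_mult_distr, pow2_abs, !vnorm_sq, dot_scale_l, dot_scale_r. ring.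
Qed.

Lemma vnorm_add_expand {n} (u v : vec n) :
  vnorm (vadd u v) ^ 2 = vnorm u ^ 2 + 2 * dot u v + vnorm v ^ 2.
Proof. rewrite !vnorm_sq, dot_add_l, !dot_add_r, (dot_comm v u). ring. Qed.

(* |u + v|^2 <= 2 |u|^2 + 2 |v|^2, from |u - v|^2 >= 0. *)
Lemma vnorm_add_sq {n} (u v : vec n) : vnorm (vadd u v) ^ 2 <= 2 * vnorm u ^ 2 + 2 * vnorm v ^ 2.
Proof.
  pose proof (dot_nonneg (vsub u v)) as H.
  rewrite !vnorm_sq, !dot_add_l, !dot_add_r.
  rewrite !dot_sub_l, !dot_sub_r, (dot_comm v u) in H. rewrite (dot_comm v u). lra.
Qed.

(* The Frobenius norm bounds |A x| / |x|; it shows that the set defining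
   [opnorm A] is bounded, hence that [opnorm A] is its least upper bound. *)
Definition frobenius {m n} (A : mat m n) : R := sqrt (vsum m (fun i => dot (A i) (A i))).

Lemma mv_frobenius_bound {m n} (A : mat m n) x : vnorm (mv A x) <= frobenius A * vnorm x.
Proof.
  pose proof (sqrt_pos (vsum m (fun i => dot (A i) (A i)))). pose proof (vnorm_nonneg x).
  apply sq_le_le; [apply vnorm_nonneg | unfold frobenius; nra|].
  rewrite Rpow_mult_distr, !vnorm_sq. unfold frobenius.
  rewrite pow2_sqrt by (apply vsum_nonneg; intros; apply dot_nonneg).
  unfold dot at 1. rewrite (Rmult_comm _ (dot x x)), <- vsum_scale. apply vsum_le. intros i.
  change (mv A x i) with (dot (A i) x). pose proof (cauchy_schwarz_sq (A i) x). nra.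
Qed.

Lemma opnorm_spec {m n} (A : mat m n) : is_opnorm A (opnorm A).
Proof.
  unfold opnorm. apply epsilon_spec.
  destruct (completeness (fun r => exists x : vec n, vnorm x <= 1 /\ r = vnorm (mv A x)))
    as [c Hc]; [| |exists c; exact Hc].
  - exists (frobenius A). intros r [x [Hx ->]].
    pose proof (mv_frobenius_bound A x). pose proof (vnorm_nonneg x).
    pose proof (sqrt_pos (vsum m (fun i => dot (A i) (A i)))). unfold frobenius in *. nra.
  - exists (vnorm (mv A vzero)), vzero. split; [rewrite vnorm_zero; lra | reflexivity].
Qed.

(* |A h| <= ||A|| |h|: apply the defining bound to the unit vector h / |h|. *)
Lemma opnorm_bound {m n} (A : mat m n) h : vnorm (mv A h) <= opnorm A * vnorm h.
Proof.
  destruct (opnorm_spec A) as [Hub _].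
  destruct (Req_dec (vnorm h) 0) as [Hh|Hh].
  - pose proof (mv_frobenius_bound A h). rewrite Hh, Rmult_0_r in *. auto.
  - pose proof (vnorm_nonneg h).
    assert (Hinv : 0 < / vnorm h) by (apply Rinv_0_lt_compat; lra).
    assert (Hunit : vnorm (vscale (/ vnorm h) h) <= 1).
    { rewrite vnorm_scale, Rabs_right, Rinv_l; lra. }
    specialize (Hub _ (ex_intro _ _ (conj Hunit eq_refl))).
    rewrite mv_scale, vnorm_scale, Rabs_right in Hub by lra.
    apply Rmult_le_compat_r with (r := vnorm h) in Hub; [|lra].
    rewrite Rmult_comm, <- Rmult_assoc, Rinv_r, Rmult_1_l in Hub; lra.
Qed.

(** * Existence of minimizers on compact sets *)

Lemma small_inv eps : 0 < eps -> exists N, forall k, (N <= k)%nat -> / (INR k + 1) < eps.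
Proof.
  intros He. destruct (archimed_cor1 eps He) as [N [HN HN0]]. exists N. intros k Hk.
  apply le_INR in Hk. apply lt_INR in HN0. simpl in HN0.
  apply Rle_lt_trans with (/ INR N); auto. apply Rinv_le_contravar; lra.
Qed.

Lemma big_nat r : exists N, forall k, (N <= k)%nat -> r < INR k.
Proof.
  destruct (small_inv (/ (Rabs r + 1))) as [N HN].
  { apply Rinv_0_lt_compat. pose proof (Rabs_pos r). lra. }
  exists N. intros k Hk. specialize (HN k Hk). pose proof (pos_INR k). pose proof (Rle_abs r).
  destruct (Rlt_or_le r (INR k)) as [Hlt|Hge]; auto.
  assert (/ (Rabs r + 1) <= / (INR k + 1)) by (apply Rinv_le_contravar; lra). lra.
Qed.

Definition increasing (phi : nat -> nat) : Prop := forall k, (phi k < phi (S k))%nat.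

Lemma increasing_ge phi : increasing phi -> forall k, (k <= phi k)%nat.
Proof. intros H k. induction k as [|k IH]; [lia|]. specialize (H k). lia. Qed.

Lemma increasing_mono phi : increasing phi -> forall j k, (j <= k)%nat -> (phi j <= phi k)%nat.
Proof. intros H j k Hjk. induction Hjk as [|k _ IH]; [lia|]. specialize (H k). lia. Qed.

Lemma extract (P : nat -> nat -> Prop) :
  (forall k N, exists p, (N <= p)%nat /\ P k p) ->
  exists phi, increasing phi /\ forall k, P k (phi k).
Proof.
  intros H.
  set (pick := fun k N => epsilon (inhabits 0%nat) (fun p => (N <= p)%nat /\ P k p)).
  assert (Hpick : forall k N, (N <= pick k N)%nat /\ P k (pick k N)).
  { intros k N. apply epsilon_spec. apply H. }
  set (phi := fix f k := match k with 0%nat => pick 0%nat 0%nat | S k' => pick k (S (f k')) end).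
  exists phi. split.
  - intros k. simpl. destruct (Hpick (S k) (S (phi k))). lia.
  - intros [|k]; apply Hpick.
Qed.

Definition converges {n} (u : nat -> vec n) (x : vec n) : Prop :=
  forall eps, eps > 0 -> exists N, forall k, (k >= N)%nat -> vnorm (vsub (u k) x) < eps.

Lemma converges_sub {n} (u : nat -> vec n) x phi :
  converges u x -> increasing phi -> converges (fun k => u (phi k)) x.
Proof.
  intros H Hphi eps He. destruct (H eps He) as [N HN]. exists N. intros k Hk.
  apply HN. pose proof (increasing_ge phi Hphi k). lia.
Qed.

Lemma bolzano_weierstrass_R (u : nat -> R) M : (forall k, Rabs (u k) <= M) ->
  exists phi l, increasing phi /\
    forall eps, eps > 0 -> exists N, forall k, (k >= N)%nat -> Rabs (u (phi k) - l) < eps.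
Proof.
  intros Hb.
  destruct (Bolzano_Weierstrass u (fun c => -M <= c <= M) (compact_P3 (-M) M)) as [l Hl].
  { intros k. now apply abs_le_between. }
  destruct (extract (fun k p => Rabs (u p - l) < / (INR k + 1))) as [phi [Hphi HP]].
  { intros k N.
    assert (Hpos : 0 < / (INR k + 1)) by (apply Rinv_0_lt_compat; pose proof (pos_INR k); lra).
    destruct (Hl (fun y => Rabs (y - l) < / (INR k + 1)) N) as [p Hp].
    - exists (mkposreal _ Hpos). intros y Hy. exact Hy.
    - exists p. exact Hp. }
  exists phi, l. split; auto. intros eps He. destruct (small_inv eps He) as [N HN].
  exists N. intros k Hk. specialize (HN k Hk). specialize (HP k). lra.
Qed.

Definition vtl {n} (u : vec (S n)) : vec n := fun i => u (Fin.FS i).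
Definition vcons {n} (a : R) (t : vec n) : vec (S n) := fun i => Fin.caseS' i (fun _ => R) a t.

Lemma coord_le {n} (u : vec n) i : Rabs (u i) <= vnorm u.
Proof.
  apply sq_le_le; [apply Rabs_pos | apply vnorm_nonneg|]. rewrite pow2_abs, vnorm_sq.
  pose proof (vsum_term n i (fun j => u j * u j) (fun j => ltac:(nra))). unfold dot. nra.
Qed.

Lemma vnorm_vtl {n} (u : vec (S n)) : vnorm (vtl u) <= vnorm u.
Proof.
  apply sq_le_le; try apply vnorm_nonneg. rewrite !vnorm_sq.
  change (dot u u) with (u Fin.F1 * u Fin.F1 + dot (vtl u) (vtl u)). nra.
Qed.

Lemma vnorm_cons_le {n} (u : vec (S n)) : vnorm u <= Rabs (u Fin.F1) + vnorm (vtl u).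
Proof.
  pose proof (Rabs_pos (u Fin.F1)). pose proof (vnorm_nonneg (vtl u)).
  apply sq_le_le; [apply vnorm_nonneg | lra|].
  rewrite vnorm_sq. change (dot u u) with (u Fin.F1 * u Fin.F1 + dot (vtl u) (vtl u)).
  rewrite <- vnorm_sq.
  replace (u Fin.F1 * u Fin.F1) with (Rabs (u Fin.F1) ^ 2) by (rewrite pow2_abs; ring). nra.
Qed.

(* Bolzano-Weierstrass in R^n, by induction on n: extract on the tail, then
   on the first coordinate. *)
Lemma bolzano_weierstrass n : forall (u : nat -> vec n) M, (forall k, vnorm (u k) <= M) ->
  exists phi x, increasing phi /\ converges (fun k => u (phi k)) x.
Proof.
  induction n as [|n IH]; intros u M Hb.
  - exists (fun k => k), vzero. split; [intros k; lia|]. intros eps He. exists 0%nat. intros k _.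
    unfold vnorm, dot. simpl. rewrite sqrt_0. lra.
  - destruct (IH (fun k => vtl (u k)) M) as [phi1 [xt [Hphi1 Htl]]].
    { intros k. eapply Rle_trans; [apply vnorm_vtl | apply Hb]. }
    destruct (bolzano_weierstrass_R (fun k => u (phi1 k) Fin.F1) M) as [phi2 [l [Hphi2 Hhd]]].
    { intros k. eapply Rle_trans; [apply coord_le | apply Hb]. }
    exists (fun k => phi1 (phi2 k)), (vcons l xt). split.
    + intros k. pose proof (Hphi2 k).
      pose proof (increasing_mono phi1 Hphi1 (S (phi2 k)) (phi2 (S k))).
      specialize (Hphi1 (phi2 k)). lia.
    + intros eps He.
      destruct (Hhd (eps / 2)) as [N2 HN2]; [lra|].
      destruct (converges_sub _ _ _ Htl Hphi2 (eps / 2)) as [N1 HN1]; [lra|].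
      exists (Nat.max N1 N2). intros k Hk.
      specialize (HN2 k ltac:(lia)). specialize (HN1 k ltac:(lia)). simpl in HN1, HN2.
      eapply Rle_lt_trans; [apply vnorm_cons_le|].
      change (vsub (u (phi1 (phi2 k))) (vcons l xt) Fin.F1) with (u (phi1 (phi2 k)) Fin.F1 - l).
      change (vtl (vsub (u (phi1 (phi2 k))) (vcons l xt)))
        with (vsub (vtl (u (phi1 (phi2 k)))) xt).
      lra.
Qed.

Lemma cluster_value {n} (S : vec n -> Prop) (F : vec n -> R) (u : nat -> vec n) :
  vclosed S -> vbounded S -> vcontinuous_on S F -> (forall k, S (u k)) ->
  exists y, S y /\ forall eps N, eps > 0 ->
    exists k, (k >= N)%nat /\ Rabs (F (u k) - F y) < eps.
Proof.
  intros Hcl [M HM] HF Hu.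
  destruct (bolzano_weierstrass n u M (fun k => HM _ (Hu k))) as [phi [y [Hphi Hconv]]].
  assert (Hy : S y) by (apply (Hcl (fun k => u (phi k))); auto).
  exists y. split; auto. intros eps N He.
  destruct (HF y Hy eps He) as [delta [Hdelta Hcont]].
  destruct (Hconv delta Hdelta) as [K HK].
  exists (phi (Nat.max N K)). pose proof (increasing_ge phi Hphi (Nat.max N K)).
  split; [lia|]. apply Hcont; auto. apply HK. lia.
Qed.

(* A continuous function on a closed bounded set is bounded below: otherwise
   a sequence with F (u k) < -k would have a finite cluster value. *)
Lemma cont_bounded_below {n} (S : vec n -> Prop) (F : vec n -> R) :
  vclosed S -> vbounded S -> vcontinuous_on S F -> exists B, forall z, S z -> B <= F z.
Proof.
  intros Hcl Hbd HF. apply NNPP. intros Hno.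
  assert (H : forall k : nat, exists z, S z /\ F z < - INR k).
  { intros k. apply NNPP. intros Hk. apply Hno. exists (- INR k). intros z Hz.
    apply Rnot_lt_le. intros Hlt. apply Hk. exists z. auto. }
  set (u := fun k => epsilon (inhabits vzero) (fun z => S z /\ F z < - INR k)).
  assert (Hu : forall k, S (u k) /\ F (u k) < - INR k) by (intros k; apply epsilon_spec, H).
  destruct (cluster_value S F u Hcl Hbd HF (fun k => proj1 (Hu k))) as [y [_ Hy]].
  destruct (big_nat (1 - F y)) as [K HK].
  destruct (Hy 1 K ltac:(lra)) as [k [Hk Hclose]].
  specialize (HK k Hk). destruct (Hu k) as [_ Hlow].
  apply Rabs_def2 in Hclose. lra.
Qed.

(* Weierstrass: a continuous function on a nonempty closed bounded set attains
   its infimum (the limit of a minimizing sequence). *)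
Lemma weierstrass {n} (S : vec n -> Prop) (F : vec n -> R) :
  vnonempty S -> vclosed S -> vbounded S -> vcontinuous_on S F ->
  exists x, S x /\ forall z, S z -> F x <= F z.
Proof.
  intros [x0 Hx0] Hcl Hbd HF.
  destruct (cont_bounded_below S F Hcl Hbd HF) as [B HB].
  destruct (completeness (fun r => exists z, S z /\ r = - F z)) as [c [Hub Hlub]].
  { exists (- B). intros r [z [Hz ->]]. specialize (HB z Hz). lra. }
  { exists (- F x0), x0. auto. }
  assert (Hinf : forall z, S z -> - c <= F z).
  { intros z Hz. assert (- F z <= c) by (apply Hub; exists z; auto). lra. }
  assert (Happrox : forall k : nat, exists z, S z /\ F z < - c + / (INR k + 1)).
  { intros k. apply NNPP. intros Hk.
    assert (0 < / (INR k + 1)) by (apply Rinv_0_lt_compat; pose proof (pos_INR k); lra).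
    assert (c <= c - / (INR k + 1)); [|lra].
    apply Hlub. intros r [z [Hz ->]].
    destruct (Rle_or_lt (- c + / (INR k + 1)) (F z)); [lra|].
    exfalso. apply Hk. exists z. auto. }
  set (u := fun k => epsilon (inhabits vzero) (fun z => S z /\ F z < - c + / (INR k + 1))).
  assert (Hu : forall k, S (u k) /\ F (u k) < - c + / (INR k + 1))
    by (intros k; apply epsilon_spec, Happrox).
  destruct (cluster_value S F u Hcl Hbd HF (fun k => proj1 (Hu k))) as [y [HyS Hy]].
  exists y. split; auto. intros z Hz. specialize (Hinf z Hz).
  destruct (Rle_or_lt (F y) (- c)) as [Hle|Hgt]; [lra|]. exfalso.
  set (eps := (F y + c) / 2).
  destruct (small_inv eps) as [K HK]; [unfold eps; lra|].
  destruct (Hy eps K ltac:(unfold eps; lra)) as [k [Hk Hclose]].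
  specialize (HK k Hk). destruct (Hu k) as [_ Hlow].
  apply Rabs_def2 in Hclose. unfold eps in *. lra.
Qed.

Lemma argmin_spec {n} (S : vec n -> Prop) (F : vec n -> R) :
  vnonempty S -> vclosed S -> vbounded S -> vcontinuous_on S F ->
  S (argmin (vinh n) S F) /\ forall z, S z -> F (argmin (vinh n) S F) <= F z.
Proof. intros. unfold argmin. apply epsilon_spec. now apply weierstrass. Qed.

Lemma cont_of_lipschitz {n} (S : vec n -> Prop) (F : vec n -> R) :
  (forall x, S x -> exists K, 0 <= K /\ forall y, S y -> vnorm (vsub y x) <= 1 ->
     Rabs (F y - F x) <= K * vnorm (vsub y x)) ->
  vcontinuous_on S F.
Proof.
  intros H x Hx eps He. destruct (H x Hx) as [K [HK HKx]].
  assert (Hq : 0 < eps / (K + 1)) by (apply Rdiv_lt_0_compat; lra).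
  exists (Rmin 1 (eps / (K + 1))). split; [apply Rmin_pos; lra|].
  intros y Hy Hd. pose proof (Rmin_l 1 (eps / (K + 1))). pose proof (Rmin_r 1 (eps / (K + 1))).
  specialize (HKx y Hy ltac:(lra)). pose proof (vnorm_nonneg (vsub y x)).
  assert (K * vnorm (vsub y x) <= K * (eps / (K + 1))) by (apply Rmult_le_compat_l; lra).
  assert (eps / (K + 1) * (K + 1) = eps) by (field; lra). nra.
Qed.

Lemma cont_add {n} (S : vec n -> Prop) F G :
  vcontinuous_on S F -> vcontinuous_on S G -> vcontinuous_on S (fun x => F x + G x).
Proof.
  intros HF HG x Hx eps He.
  destruct (HF x Hx (eps / 2)) as [d1 [Hd1 H1]]; [lra|].
  destruct (HG x Hx (eps / 2)) as [d2 [Hd2 H2]]; [lra|].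
  exists (Rmin d1 d2). split; [apply Rmin_pos; lra|]. intros y Hy Hd.
  pose proof (Rmin_l d1 d2). pose proof (Rmin_r d1 d2).
  specialize (H1 y Hy ltac:(lra)). specialize (H2 y Hy ltac:(lra)).
  replace (F y + G y - (F x + G x)) with ((F y - F x) + (G y - G x)) by ring.
  pose proof (Rabs_triang (F y - F x) (G y - G x)). lra.
Qed.

Lemma cont_scale {n} (S : vec n -> Prop) c F :
  vcontinuous_on S F -> vcontinuous_on S (fun x => c * F x).
Proof.
  intros HF x Hx eps He. pose proof (Rabs_pos c).
  destruct (HF x Hx (eps / (Rabs c + 1))) as [d [Hd H1]]; [apply Rdiv_lt_0_compat; lra|].
  exists d. split; auto. intros y Hy Hdy. specialize (H1 y Hy Hdy).
  replace (c * F y - c * F x) with (c * (F y - F x)) by ring. rewrite Rabs_mult.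
  pose proof (Rabs_pos (F y - F x)).
  assert (Rabs c * Rabs (F y - F x) <= Rabs c * (eps / (Rabs c + 1)))
    by (apply Rmult_le_compat_l; lra).
  assert (eps / (Rabs c + 1) * (Rabs c + 1) = eps) by (field; lra).
  assert (0 < eps / (Rabs c + 1)) by (apply Rdiv_lt_0_compat; lra). nra.
Qed.

Lemma vsub_split {n} (z x x0 : vec n) : vsub z x0 = vadd (vsub z x) (vsub x x0).
Proof. extensionality i. unfold vsub, vadd. ring. Qed.

Lemma cont_dot {n} (S : vec n -> Prop) c x0 : vcontinuous_on S (fun z => dot c (vsub z x0)).
Proof.
  apply cont_of_lipschitz. intros x _. exists (vnorm c). split; [apply vnorm_nonneg|].
  intros y _ _. rewrite (vsub_split y x x0), dot_add_r.
  replace (dot c (vsub y x) + dot c (vsub x x0) - dot c (vsub x x0)) with (dot c (vsub y x))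
    by ring.
  apply cauchy_schwarz.
Qed.

Lemma cont_dot_mv {m n} (S : vec n -> Prop) (A : mat m n) y x0 :
  vcontinuous_on S (fun z => dot y (mv A (vsub z x0))).
Proof.
  apply cont_of_lipschitz. intros x _. exists (vnorm y * frobenius A).
  split; [apply Rmult_le_pos; [apply vnorm_nonneg | apply sqrt_pos]|].
  intros z _ _. rewrite (vsub_split z x x0), mv_add, dot_add_r.
  replace (dot y (mv A (vsub z x)) + dot y (mv A (vsub x x0)) - dot y (mv A (vsub x x0)))
    with (dot y (mv A (vsub z x))) by ring.
  eapply Rle_trans; [apply cauchy_schwarz|].
  rewrite Rmult_assoc. apply Rmult_le_compat_l; [apply vnorm_nonneg | apply mv_frobenius_bound].
Qed.

Lemma cont_dist_sq {n} (S : vec n -> Prop) x0 : vcontinuous_on S (fun z => vnorm (vsub z x0) ^ 2).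
Proof.
  apply cont_of_lipschitz. intros x _. pose proof (vnorm_nonneg (vsub x x0)).
  exists (2 * vnorm (vsub x x0) + 1). split; [lra|]. intros z _ Hz.
  rewrite !vnorm_sq, (vsub_split z x x0), dot_add_l, !dot_add_r,
    (dot_comm (vsub x x0) (vsub z x)).
  replace (dot (vsub z x) (vsub z x) + dot (vsub z x) (vsub x x0)
           + (dot (vsub z x) (vsub x x0) + dot (vsub x x0) (vsub x x0))
           - dot (vsub x x0) (vsub x x0))
    with (dot (vsub z x) (vsub z x) + 2 * dot (vsub z x) (vsub x x0)) by ring.
  eapply Rle_trans; [apply Rabs_triang|].
  rewrite Rabs_mult, (Rabs_right 2), Rabs_right by (try apply Rle_ge, dot_nonneg; lra).
  rewrite <- vnorm_sq.
  pose proof (cauchy_schwarz (vsub z x) (vsub x x0)). pose proof (vnorm_nonneg (vsub z x)). nra.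
Qed.

Lemma vadd_sub {n} (x y : vec n) : vadd x (vsub y x) = y.
Proof. extensionality i. unfold vadd, vsub. ring. Qed.

Lemma cont_of_gradient {n} (S : vec n -> Prop) f g : is_gradient f g -> vcontinuous_on S f.
Proof.
  intros Hg x _ eps He. destruct (Hg x 1 ltac:(lra)) as [d [Hd H]].
  pose proof (vnorm_nonneg (g x)).
  set (q := eps / (vnorm (g x) + 2)).
  assert (Hq : 0 < q) by (apply Rdiv_lt_0_compat; lra).
  assert (Eq : q * (vnorm (g x) + 2) = eps) by (unfold q; field; lra).
  exists (Rmin d q). split; [apply Rmin_pos; auto|].
  intros y _ Hy. pose proof (Rmin_l d q). pose proof (Rmin_r d q).
  pose proof (vnorm_nonneg (vsub y x)).
  specialize (H (vsub y x) ltac:(lra)). rewrite vadd_sub in H.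
  pose proof (cauchy_schwarz (g x) (vsub y x)).
  replace (f y - f x) with ((f y - f x - dot (g x) (vsub y x)) + dot (g x) (vsub y x)) by ring.
  eapply Rle_lt_trans; [apply Rabs_triang|].
  assert ((vnorm (g x) + 2) * vnorm (vsub y x) < (vnorm (g x) + 2) * q)
    by (apply Rmult_lt_compat_l; lra).
  nra.
Qed.

Lemma cont_lin_mv {m n} (S : vec n -> Prop) (A : mat m n) y :
  vcontinuous_on S (fun z => dot y (mv A z)).
Proof.
  pose proof (cont_dot_mv S A y vzero) as H.
  replace (fun z => dot y (mv A (vsub z vzero))) with (fun z => dot y (mv A z)) in H; auto.
  extensionality z. do 3 f_equal. extensionality i. unfold vsub, vzero. ring.
Qed.

Definition compact_convex {n} (S : vec n -> Prop) : Prop :=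
  vnonempty S /\ vclosed S /\ vconvex_set S /\ vbounded S.

(* The (separable) objective of x^*(y; beta) is minimized blockwise, each
   block being a continuous function on a compact set. *)
Lemma xstar_spec {n1 n2 m} (X1 : vec n1 -> Prop) (X2 : vec n2 -> Prop) phi1 phi2 g1 g2
  (A1 : mat m n1) (A2 : mat m n2) b p1 p2 s1 s2 y beta :
  compact_convex X1 -> compact_convex X2 -> prox_function X1 s1 p1 -> prox_function X2 s2 p2 ->
  is_gradient phi1 g1 -> is_gradient phi2 g2 ->
  Xprod X1 X2 (xstar X1 X2 phi1 phi2 A1 A2 b p1 p2 y beta) /\
  forall z, Xprod X1 X2 z ->
    dobj phi1 phi2 A1 A2 b p1 p2 y beta (xstar X1 X2 phi1 phi2 A1 A2 b p1 p2 y beta)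
    <= dobj phi1 phi2 A1 A2 b p1 p2 y beta z.
Proof.
  intros [Hn1 [Hc1 [_ Hb1]]] [Hn2 [Hc2 [_ Hb2]]] [Hp1 _] [Hp2 _] Hg1 Hg2.
  assert (Hsplit : forall x1 x2, dobj phi1 phi2 A1 A2 b p1 p2 y beta (x1, x2) =
     (phi1 x1 + dot y (mv A1 x1) + beta * p1 x1)
     + (phi2 x2 + dot y (mv A2 x2) + beta * p2 x2) - dot y b).
  { intros. unfold dobj, phi, Aop. simpl. rewrite dot_sub_r, dot_add_r. ring. }
  destruct (weierstrass X1 (fun z => phi1 z + dot y (mv A1 z) + beta * p1 z))
    as [m1 [Hm1 Hmin1]]; auto.
  { repeat apply cont_add;
      [eapply cont_of_gradient; eauto | apply cont_lin_mv | now apply cont_scale]. }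
  destruct (weierstrass X2 (fun z => phi2 z + dot y (mv A2 z) + beta * p2 z))
    as [m2 [Hm2 Hmin2]]; auto.
  { repeat apply cont_add;
      [eapply cont_of_gradient; eauto | apply cont_lin_mv | now apply cont_scale]. }
  unfold xstar, argmin. apply epsilon_spec. exists (m1, m2). split; [split; auto|].
  intros [z1 z2] [Hz1 Hz2]. simpl in *. rewrite !Hsplit.
  specialize (Hmin1 z1 Hz1). specialize (Hmin2 z2 Hz2). lra.
Qed.

Definition block_model {n m} (gradi : vec n -> vec n) (Ai : mat m n) (Lhat : R) (ys : vec m)
  (h z : vec n) : R :=
  dot (gradi h) (vsub z h) + dot ys (mv Ai (vsub z h)) + Lhat / 2 * (vnorm (vsub z h)) ^ 2.

Lemma Gblock_spec {n m} (Xi : vec n -> Prop) (gradi : vec n -> vec n) (Ai : mat m n) Lhat ys h :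
  compact_convex Xi ->
  Xi (Gblock Xi gradi Ai Lhat ys h) /\
  forall z, Xi z -> block_model gradi Ai Lhat ys h (Gblock Xi gradi Ai Lhat ys h)
                    <= block_model gradi Ai Lhat ys h z.
Proof.
  intros [Hn [Hc [_ Hb]]]. apply (argmin_spec Xi (block_model gradi Ai Lhat ys h)); auto.
  repeat apply cont_add; [apply cont_dot | apply cont_dot_mv | apply cont_scale, cont_dist_sq].
Qed.

(** * First-order facts on convex and smooth functions *)

Lemma vcomb_eq {n} (x y : vec n) t :
  vadd (vscale t y) (vscale (1 - t) x) = vadd x (vscale t (vsub y x)).
Proof. extensionality i. unfold vadd, vscale, vsub. ring. Qed.

(* Gradient inequality: a differentiable convex function lies above its
   tangent planes.  The difference quotient along [x, y] is at most f y - f x,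
   and it tends to the directional derivative. *)
Lemma gradient_inequality {n} (f : vec n -> R) g : convex_fun f -> is_gradient f g ->
  forall x y, f x + dot (g x) (vsub y x) <= f y.
Proof.
  intros Hc Hg x y. set (d := vsub y x). pose proof (vnorm_nonneg d) as Hd.
  assert (Happrox : forall eps, eps > 0 -> dot (g x) d <= f y - f x + eps * vnorm d).
  { intros eps He. destruct (Hg x eps He) as [del [Hdel H]].
    set (t := Rmin 1 (del / (2 * (vnorm d + 1)))).
    assert (Ht0 : 0 < t) by (apply Rmin_pos; [lra | apply Rdiv_lt_0_compat; lra]).
    assert (Ht1 : t <= 1) by apply Rmin_l.
    assert (Ht2 : t <= del / (2 * (vnorm d + 1))) by apply Rmin_r.
    assert (Hsmall : vnorm (vscale t d) < del).
    { rewrite vnorm_scale, Rabs_right by lra.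
      assert (del / (2 * (vnorm d + 1)) * (2 * (vnorm d + 1)) = del) by (field; lra).
      assert (t * vnorm d <= del / (2 * (vnorm d + 1)) * vnorm d)
        by (apply Rmult_le_compat_r; lra).
      nra. }
    specialize (H _ Hsmall). specialize (Hc y x t ltac:(lra)).
    rewrite vcomb_eq in Hc. fold d in Hc.
    rewrite dot_scale_r, vnorm_scale, (Rabs_right t) in H by lra.
    apply abs_le_between in H.
    apply Rmult_le_reg_l with t; lra. }
  destruct (Rle_or_lt (dot (g x) d) (f y - f x)) as [Hle|Hgt]; [lra|]. exfalso.
  set (eps := (dot (g x) d - (f y - f x)) / (2 * (vnorm d + 1))).
  assert (He : eps > 0) by (unfold eps; apply Rdiv_lt_0_compat; lra).
  specialize (Happrox eps He).
  assert (eps * (2 * (vnorm d + 1)) = dot (g x) d - (f y - f x)) by (unfold eps; field; lra).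
  nra.
Qed.

Lemma line_derivative {n} (f : vec n -> R) g x d t : is_gradient f g ->
  derivable_pt_lim (fun s => f (vadd x (vscale s d))) t (dot (g (vadd x (vscale t d))) d).
Proof.
  intros Hg eps He. set (p := vadd x (vscale t d)). pose proof (vnorm_nonneg d) as Hnd.
  destruct (Hg p (eps / (2 * (vnorm d + 1)))) as [del [Hdel H]]; [apply Rdiv_lt_0_compat; lra|].
  assert (Hpos : 0 < del / (vnorm d + 1)) by (apply Rdiv_lt_0_compat; lra).
  exists (mkposreal _ Hpos). simpl. intros h Hh0 Hh.
  replace (vadd x (vscale (t + h) d)) with (vadd p (vscale h d))
    by (unfold p; extensionality i; unfold vadd, vscale; ring).
  assert (Hsmall : vnorm (vscale h d) < del).
  { rewrite vnorm_scale. pose proof (Rabs_pos h).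
    assert (del / (vnorm d + 1) * (vnorm d + 1) = del) by (field; lra).
    assert (Rabs h * (vnorm d + 1) < del / (vnorm d + 1) * (vnorm d + 1))
      by (apply Rmult_lt_compat_r; lra).
    nra. }
  specialize (H _ Hsmall). rewrite dot_scale_r, vnorm_scale in H.
  replace ((f (vadd p (vscale h d)) - f p) / h - dot (g p) d)
    with ((f (vadd p (vscale h d)) - f p - h * dot (g p) d) / h) by (field; auto).
  unfold Rdiv. rewrite Rabs_mult, Rabs_inv.
  assert (Ha : 0 < Rabs h) by (apply Rabs_pos_lt; auto).
  apply Rmult_lt_reg_r with (Rabs h); auto.
  rewrite Rmult_assoc, Rinv_l, Rmult_1_r by lra.
  assert (eps / (2 * (vnorm d + 1)) * (2 * (vnorm d + 1)) = eps) by (field; lra).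
  assert (0 < eps / (2 * (vnorm d + 1))) by (apply Rdiv_lt_0_compat; lra).
  nra.
Qed.

Lemma quadratic_derivative a K c :
  derivable_pt_lim (fun t => a * t + K * (t * t)) c (a + 2 * K * c).
Proof.
  intros eps He. pose proof (Rabs_pos K).
  assert (Hpos : 0 < eps / (Rabs K + 1)) by (apply Rdiv_lt_0_compat; lra).
  exists (mkposreal _ Hpos). simpl. intros h Hh0 Hh.
  replace ((a * (c + h) + K * ((c + h) * (c + h)) - (a * c + K * (c * c))) / h
           - (a + 2 * K * c)) with (K * h) by (field; auto).
  rewrite Rabs_mult. pose proof (Rabs_pos h).
  assert (eps / (Rabs K + 1) * (Rabs K + 1) = eps) by (field; lra). nra.
Qed.

(* Descent lemma: a function with L-Lipschitz gradient lies below the quadratic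
   upper model f x + g x . (y - x) + L/2 |y - x|^2.  By the mean value theorem
   applied to f minus the model along [x, y], whose derivative is nonpositive. *)
Lemma descent_lemma {n} (f : vec n -> R) g L : is_gradient f g -> lipschitz g L ->
  forall x y, f y <= f x + dot (g x) (vsub y x) + L / 2 * vnorm (vsub y x) ^ 2.
Proof.
  intros Hg Hl x y. set (d := vsub y x).
  set (a := dot (g x) d). set (K := L / 2 * vnorm d ^ 2).
  set (k := fun t => f (vadd x (vscale t d)) - (a * t + K * (t * t))).
  set (k' := fun t => dot (g (vadd x (vscale t d))) d - (a + 2 * K * t)).
  destruct (MVT_cor2 k k' 0 1) as [c [Hmvt Hc]]; [lra| |].
  { intros c _. apply (derivable_pt_lim_minus (fun s => f (vadd x (vscale s d)))).
    - now apply line_derivative.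
    - apply quadratic_derivative. }
  assert (Hslope : k' c <= 0).
  { unfold k'. set (pc := vadd x (vscale c d)).
    assert (Hdiff : dot (g pc) d - a = dot (vsub (g pc) (g x)) d)
      by (unfold a; rewrite dot_sub_l; ring).
    pose proof (cauchy_schwarz (vsub (g pc) (g x)) d) as Hcs.
    pose proof (Rle_abs (dot (vsub (g pc) (g x)) d)).
    pose proof (Hl pc x) as Hlip.
    replace (vsub pc x) with (vscale c d) in Hlip
      by (unfold pc; extensionality i; unfold vsub, vadd, vscale; ring).
    rewrite vnorm_scale, Rabs_right in Hlip by lra.
    pose proof (vnorm_nonneg d). pose proof (vnorm_nonneg (vsub (g pc) (g x))).
    assert (vnorm (vsub (g pc) (g x)) * vnorm d <= L * (c * vnorm d) * vnorm d)
      by (apply Rmult_le_compat_r; lra).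
    unfold K. nra. }
  unfold k in Hmvt.
  replace (vadd x (vscale 0 d)) with x in Hmvt by (extensionality i; unfold vadd, vscale; ring).
  replace (vadd x (vscale 1 d)) with y in Hmvt
    by (extensionality i; unfold d, vadd, vscale, vsub; ring).
  unfold K, a in *. nra.
Qed.

(** * The smoothed dual function: strong convexity and quadratic growth *)

Section DualObjective.
Context {n1 n2 m : nat} (X1 : vec n1 -> Prop) (X2 : vec n2 -> Prop)
  (phi1 : vec n1 -> R) (phi2 : vec n2 -> R) (A1 : mat m n1) (A2 : mat m n2) (b : vec m)
  (p1 : vec n1 -> R) (p2 : vec n2 -> R).

Local Notation Lag := (dobj phi1 phi2 A1 A2 b p1 p2).
Local Notation res x := (vsub (Aop A1 A2 x) b).

Lemma residual_affine a c u1 u2 v1 v2 : a + c = 1 ->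
  res (vadd (vscale a u1) (vscale c v1), vadd (vscale a u2) (vscale c v2)) =
  vadd (vscale a (res (u1, u2))) (vscale c (res (v1, v2))).
Proof.
  intros Hac. unfold Aop. simpl. rewrite !mv_add, !mv_scale.
  extensionality i. unfold vsub, vadd, vscale. replace c with (1 - a) by lra. ring.
Qed.

Lemma residual_shift (h x : vec n1 * vec n2) :
  res x = vadd (res h) (vadd (mv A1 (vsub (fst x) (fst h))) (mv A2 (vsub (snd x) (snd h)))).
Proof. unfold Aop. rewrite !mv_sub. extensionality i. unfold vsub, vadd. ring. Qed.

Lemma lagrangian_interp y y' beta t x :
  Lag (vadd (vscale (1 - t) y) (vscale t y')) ((1 - t) * beta) x =
  (1 - t) * Lag y beta x + t * (phi phi1 phi2 x + dot y' (res x)).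
Proof. unfold dobj. rewrite dot_add_l, !dot_scale_l. ring. Qed.

Section StrongConvexity.
Variables (sigma1 sigma2 beta : R) (y : vec m).
Hypotheses (Hcv1 : vconvex_set X1) (Hcv2 : vconvex_set X2)
  (Hphi1 : convex_fun phi1) (Hphi2 : convex_fun phi2)
  (Hp1 : strongly_convex_on X1 sigma1 p1) (Hp2 : strongly_convex_on X2 sigma2 p2)
  (Hbeta : 0 <= beta).

Definition prox_dist (x s : vec n1 * vec n2) : R :=
  sigma1 / 2 * vnorm (vsub (fst x) (fst s)) ^ 2 + sigma2 / 2 * vnorm (vsub (snd x) (snd s)) ^ 2.

(* The Lagrangian is beta-strongly convex along segments of X (w.r.t. the
   prox distance): its linear part is affine, phi is convex and p strongly
   convex. *)
Lemma lagrangian_segment (x s : vec n1 * vec n2) t :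
  Xprod X1 X2 x -> Xprod X1 X2 s -> 0 <= t <= 1 ->
  Lag y beta (vadd (vscale t (fst x)) (vscale (1 - t) (fst s)),
              vadd (vscale t (snd x)) (vscale (1 - t) (snd s)))
  <= t * Lag y beta x + (1 - t) * Lag y beta s - t * (1 - t) * (beta * prox_dist x s).
Proof.
  destruct x as [x1 x2], s as [s1 s2]. intros [Hx1 Hx2] [Hs1 Hs2] Ht.
  unfold dobj, phi, prox_dist. simpl.
  rewrite residual_affine, dot_add_r, !dot_scale_r by ring.
  pose proof (Hphi1 x1 s1 t Ht). pose proof (Hphi2 x2 s2 t Ht).
  pose proof (Rmult_le_compat_l beta _ _ Hbeta (Hp1 x1 s1 t Hx1 Hs1 Ht)).
  pose proof (Rmult_le_compat_l beta _ _ Hbeta (Hp2 x2 s2 t Hx2 Hs2 Ht)).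
  nra.
Qed.

Lemma le_of_interp_le Q D : (forall t, 0 < t <= 1 -> (1 - t) * Q <= D) -> Q <= D.
Proof.
  intros H. destruct (Rle_or_lt Q D) as [Hle|Hlt]; auto. exfalso.
  pose proof (H 1 ltac:(lra)) as HD.
  set (t := (Q - D) / (2 * Q)).
  assert (t * (2 * Q) = Q - D) by (unfold t; field; lra).
  assert (Ht : 0 < t <= 1) by (split; nra).
  specialize (H t Ht). nra.
Qed.

Lemma lagrangian_growth (xs x : vec n1 * vec n2) :
  Xprod X1 X2 xs -> (forall z, Xprod X1 X2 z -> Lag y beta xs <= Lag y beta z) ->
  Xprod X1 X2 x -> Lag y beta xs + beta * prox_dist x xs <= Lag y beta x.
Proof.
  intros Hxs Hmin Hx.
  assert (Q_le : beta * prox_dist x xs <= Lag y beta x - Lag y beta xs); [|lra].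
  apply le_of_interp_le. intros t Ht.
  assert (Hz : Xprod X1 X2 (vadd (vscale t (fst x)) (vscale (1 - t) (fst xs)),
                            vadd (vscale t (snd x)) (vscale (1 - t) (snd xs)))).
  { destruct Hx, Hxs. split; [apply Hcv1 | apply Hcv2]; auto; lra. }
  pose proof (Hmin _ Hz). pose proof (lagrangian_segment x xs t Hx Hxs ltac:(lra)).
  apply Rmult_le_reg_l with t; lra.
Qed.

End StrongConvexity.
End DualObjective.

(** * One iteration: the dual lower bound *)

(* Interpolating the gradient inequality at h = (1 - t) a + t s between a and w. *)
Lemma convex_interp_lower {n} (f : vec n -> R) g (a s w : vec n) t :
  convex_fun f -> is_gradient f g -> 0 <= t <= 1 ->
  f (vadd (vscale (1 - t) a) (vscale t s))
  + t * dot (g (vadd (vscale (1 - t) a) (vscale t s))) (vsub w s)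
  <= (1 - t) * f a + t * f w.
Proof.
  intros Hc Hg Ht. set (h := vadd (vscale (1 - t) a) (vscale t s)).
  pose proof (gradient_inequality f g Hc Hg h a) as Ha.
  pose proof (gradient_inequality f g Hc Hg h w) as Hw.
  assert (Hcomb : (1 - t) * dot (g h) (vsub a h) + t * dot (g h) (vsub w h)
                  = t * dot (g h) (vsub w s)).
  { rewrite <- !dot_scale_r, <- dot_add_r. f_equal.
    unfold h. extensionality i. unfold vadd, vscale, vsub. ring. }
  nra.
Qed.

(* Quadratic penalty under the interpolation r = (1 - t) u + t q with the
   smoothing parameter shrunk to (1 - t) beta: the defect is a nonnegative
   multiple of |q|^2. *)
Lemma penalty_interp {m} (u q r : vec m) beta t :
  0 < t < 1 -> 0 < beta -> r = vadd (vscale (1 - t) u) (vscale t q) ->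
  1 / (2 * ((1 - t) * beta)) * vnorm r ^ 2 - t * dot (vscale (1 / ((1 - t) * beta)) r) q
  <= (1 - t) * (1 / (2 * beta) * vnorm u ^ 2).
Proof.
  intros Ht Hb ->.
  rewrite !vnorm_sq, dot_scale_l, !dot_add_l, !dot_add_r, !dot_scale_l, !dot_scale_r,
    (dot_comm q u).
  assert (Hrem : 0 <= t ^ 2 * dot q q / (2 * ((1 - t) * beta))).
  { apply Rmult_le_pos; [apply Rmult_le_pos; [apply pow2_ge_0 | apply dot_nonneg]|].
    apply Rlt_le, Rinv_0_lt_compat. nra. }
  match goal with |- ?L <= ?R => replace R with (L + t ^ 2 * dot q q / (2 * ((1 - t) * beta))) end.
  - lra.
  - field. lra.
Qed.

(* Value of a block model at the interpolated point, with the curvature term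
   replaced by the available strong convexity c. *)
Definition block_target {n m} (t : R) (gradi : vec n -> vec n) (Ai : mat m n) (ys : vec m)
  (c : R) (h s w : vec n) : R :=
  t * dot (gradi h) (vsub w s) + t * dot ys (mv Ai (vsub w s)) + c / 2 * vnorm (vsub w s) ^ 2.

(* Lower bound on d(ybar+; beta1+), evaluated at any point w of X: combine the
   affine dependence of the Lagrangian on (y, beta), quadratic growth at
   x^*(ybar; beta1), the gap assumption f(xbar; beta2) <= d(ybar; beta1),
   convexity of phi_i, and the penalty interpolation. *)
Lemma dual_lower_bound {n1 n2 m} (X1 : vec n1 -> Prop) (X2 : vec n2 -> Prop)
  (phi1 : vec n1 -> R) (phi2 : vec n2 -> R) (grad1 : vec n1 -> vec n1) (grad2 : vec n2 -> vec n2)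
  (A1 : mat m n1) (A2 : mat m n2) (b : vec m) (p1 : vec n1 -> R) (p2 : vec n2 -> R)
  (sigma1 sigma2 beta1 beta2 t : R) (xbar xs xhat w : vec n1 * vec n2)
  (ybar ys ybarp : vec m) (beta1p beta2p : R) :
  vconvex_set X1 -> vconvex_set X2 -> convex_fun phi1 -> convex_fun phi2 ->
  is_gradient phi1 grad1 -> is_gradient phi2 grad2 ->
  strongly_convex_on X1 sigma1 p1 -> strongly_convex_on X2 sigma2 p2 ->
  0 < beta1 -> 0 < beta2 -> 0 < t < 1 ->
  Xprod X1 X2 xs ->
  (forall z, Xprod X1 X2 z ->
     dobj phi1 phi2 A1 A2 b p1 p2 ybar beta1 xs <= dobj phi1 phi2 A1 A2 b p1 p2 ybar beta1 z) ->
  ffun phi1 phi2 A1 A2 b xbar beta2 <= dobj phi1 phi2 A1 A2 b p1 p2 ybar beta1 xs ->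
  beta1p = (1 - t) * beta1 -> beta2p = (1 - t) * beta2 ->
  xhat = (vadd (vscale (1 - t) (fst xbar)) (vscale t (fst xs)),
          vadd (vscale (1 - t) (snd xbar)) (vscale t (snd xs))) ->
  ys = ystar A1 A2 b xhat beta2p ->
  ybarp = vadd (vscale (1 - t) ybar) (vscale t ys) ->
  Xprod X1 X2 w ->
  phi phi1 phi2 xhat + 1 / (2 * beta2p) * vnorm (vsub (Aop A1 A2 xhat) b) ^ 2
  + block_target t grad1 A1 ys ((1 - t) * beta1 * sigma1) (fst xhat) (fst xs) (fst w)
  + block_target t grad2 A2 ys ((1 - t) * beta1 * sigma2) (snd xhat) (snd xs) (snd w)
  <= dobj phi1 phi2 A1 A2 b p1 p2 ybarp beta1p w.
Proof.
  intros Hcv1 Hcv2 Hphi1 Hphi2 Hg1 Hg2 Hp1 Hp2 Hb1 Hb2 Ht Hxs Hmin Hgap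
    Hbeta1p Hbeta2p Hxhat Hys Hybarp Hw.
  rewrite Hybarp, Hbeta1p, lagrangian_interp.
  pose proof (lagrangian_growth X1 X2 phi1 phi2 A1 A2 b p1 p2 sigma1 sigma2 beta1 ybar
    Hcv1 Hcv2 Hphi1 Hphi2 Hp1 Hp2 ltac:(lra) xs w Hxs Hmin Hw) as Hgrowth.
  pose proof (convex_interp_lower phi1 grad1 (fst xbar) (fst xs) (fst w) t Hphi1 Hg1 ltac:(lra)).
  pose proof (convex_interp_lower phi2 grad2 (snd xbar) (snd xs) (snd w) t Hphi2 Hg2 ltac:(lra)).
  assert (Hres : vsub (Aop A1 A2 xhat) b = vadd (vscale (1 - t) (vsub (Aop A1 A2 xbar) b))
                                                (vscale t (vsub (Aop A1 A2 xs) b))).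
  { rewrite Hxhat. destruct xbar, xs. apply residual_affine. ring. }
  pose proof (penalty_interp _ _ _ beta2 t Ht Hb2 Hres) as Hpen.
  rewrite <- Hbeta2p in Hpen. fold (ystar A1 A2 b xhat beta2p) in Hpen. rewrite <- Hys in Hpen.
  rewrite (residual_shift A1 A2 b xs w), !dot_add_r.
  assert (Hscaled : (1 - t) * (ffun phi1 phi2 A1 A2 b xbar beta2
                               + beta1 * prox_dist sigma1 sigma2 w xs)
                    <= (1 - t) * dobj phi1 phi2 A1 A2 b p1 p2 ybar beta1 w)
    by (apply Rmult_le_compat_l; lra).
  rewrite Hxhat in *. unfold ffun, phi, prox_dist, block_target in *. simpl in *.
  lra.
Qed.

(** * One iteration: the primal upper bound *)

(* Blockwise quadratic upper model: the descent lemma for phi_i together with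
   |A_i d| <= ||A_i|| |d| is dominated by the model of G_i, whose curvature
   L_i^hat accounts for both. *)
Lemma block_upper {n m} (f : vec n -> R) g L (A : mat m n) (r : vec m) beta Lhat (h z : vec n) :
  is_gradient f g -> lipschitz g L -> 0 < beta -> L + 2 * opnorm A ^ 2 / beta <= Lhat ->
  f z + 1 / beta * dot r (mv A (vsub z h)) + 1 / beta * vnorm (mv A (vsub z h)) ^ 2
  <= f h + block_model g A Lhat (vscale (1 / beta) r) h z.
Proof.
  intros Hg Hl Hb HL.
  pose proof (descent_lemma f g L Hg Hl h z) as Hdesc.
  assert (Hop : vnorm (mv A (vsub z h)) ^ 2 <= opnorm A ^ 2 * vnorm (vsub z h) ^ 2).
  { rewrite <- Rpow_mult_distr. apply pow_incr.
    split; [apply vnorm_nonneg | apply opnorm_bound]. }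
  assert (Hcurv : 1 / beta * (opnorm A ^ 2 * vnorm (vsub z h) ^ 2)
                  <= (Lhat - L) / 2 * vnorm (vsub z h) ^ 2).
  { replace (1 / beta * (opnorm A ^ 2 * vnorm (vsub z h) ^ 2))
      with (opnorm A ^ 2 / beta * vnorm (vsub z h) ^ 2) by (field; lra).
    apply Rmult_le_compat_r; [apply pow2_ge_0 | lra]. }
  assert (1 / beta * vnorm (mv A (vsub z h)) ^ 2
          <= 1 / beta * (opnorm A ^ 2 * vnorm (vsub z h) ^ 2)).
  { apply Rmult_le_compat_l; [apply Rlt_le, Rdiv_lt_0_compat|]; lra. }
  unfold block_model. rewrite dot_scale_l. lra.
Qed.

(* Quadratic upper model of f(. ; beta) around h, split into the two block
   models; the coupling |A_1 d_1 + A_2 d_2|^2 <= 2|A_1 d_1|^2 + 2|A_2 d_2|^2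
   is what forces the factor 2 in L_i^hat. *)
Lemma smooth_upper_model {n1 n2 m} (phi1 : vec n1 -> R) (phi2 : vec n2 -> R)
  (grad1 : vec n1 -> vec n1) (grad2 : vec n2 -> vec n2) (L1 L2 : R)
  (A1 : mat m n1) (A2 : mat m n2) (b : vec m) (beta Lhat1 Lhat2 : R)
  (h : vec n1 * vec n2) (x1 : vec n1) (x2 : vec n2) (ys : vec m) :
  is_gradient phi1 grad1 -> is_gradient phi2 grad2 ->
  lipschitz grad1 L1 -> lipschitz grad2 L2 -> 0 < beta ->
  L1 + 2 * opnorm A1 ^ 2 / beta <= Lhat1 -> L2 + 2 * opnorm A2 ^ 2 / beta <= Lhat2 ->
  ys = ystar A1 A2 b h beta ->
  ffun phi1 phi2 A1 A2 b (x1, x2) beta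
  <= phi phi1 phi2 h + 1 / (2 * beta) * vnorm (vsub (Aop A1 A2 h) b) ^ 2
     + block_model grad1 A1 Lhat1 ys (fst h) x1 + block_model grad2 A2 Lhat2 ys (snd h) x2.
Proof.
  intros Hg1 Hg2 Hl1 Hl2 Hb HL1 HL2 ->. unfold ystar.
  set (r := vsub (Aop A1 A2 h) b).
  pose proof (block_upper phi1 grad1 L1 A1 r beta Lhat1 (fst h) x1 Hg1 Hl1 Hb HL1).
  pose proof (block_upper phi2 grad2 L2 A2 r beta Lhat2 (snd h) x2 Hg2 Hl2 Hb HL2).
  set (d1 := mv A1 (vsub x1 (fst h))) in *. set (d2 := mv A2 (vsub x2 (snd h))) in *.
  assert (Hsq : vnorm (vsub (Aop A1 A2 (x1, x2)) b) ^ 2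
                <= vnorm r ^ 2 + 2 * dot r d1 + 2 * dot r d2
                   + 2 * vnorm d1 ^ 2 + 2 * vnorm d2 ^ 2).
  { rewrite (residual_shift A1 A2 b h (x1, x2)). cbn [fst snd]. fold r d1 d2.
    rewrite vnorm_add_expand, dot_add_r. pose proof (vnorm_add_sq d1 d2). lra. }
  assert (Hpos : 0 < 1 / (2 * beta)) by (apply Rdiv_lt_0_compat; lra).
  apply Rmult_le_compat_l with (r := 1 / (2 * beta)) in Hsq; [|lra].
  replace (1 / (2 * beta) * (vnorm r ^ 2 + 2 * dot r d1 + 2 * dot r d2
                             + 2 * vnorm d1 ^ 2 + 2 * vnorm d2 ^ 2))
    with (1 / (2 * beta) * vnorm r ^ 2 + (1 / beta * dot r d1 + 1 / beta * vnorm d1 ^ 2)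
          + (1 / beta * dot r d2 + 1 / beta * vnorm d2 ^ 2)) in Hsq by (field; lra).
  unfold ffun, phi. cbn [fst snd]. lra.
Qed.

(* The block step: G_i minimizes its model over X_i, in particular beats the
   interpolated point z = (1 - t) a + t w, where z - h = t (w - s). *)
Lemma block_step {n m} (Xi : vec n -> Prop) (gradi : vec n -> vec n) (Ai : mat m n)
  (Lhat : R) (ys : vec m) (a s w h : vec n) (t c : R) :
  compact_convex Xi -> Xi a -> Xi w -> 0 <= t <= 1 ->
  h = vadd (vscale (1 - t) a) (vscale t s) -> Lhat * t ^ 2 <= c ->
  block_model gradi Ai Lhat ys h (Gblock Xi gradi Ai Lhat ys h)
  <= block_target t gradi Ai ys c h s w.
Proof.
  intros HX Ha Hw Ht Hh Hc. pose proof HX as [_ [_ [Hcv _]]].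
  set (z := vadd (vscale (1 - t) a) (vscale t w)).
  assert (Hz : Xi z).
  { unfold z. replace t with (1 - (1 - t)) at 2 by ring. apply Hcv; auto; lra. }
  destruct (Gblock_spec Xi gradi Ai Lhat ys h HX) as [_ Hmin].
  eapply Rle_trans; [apply (Hmin z Hz)|].
  assert (Hzh : vsub z h = vscale t (vsub w s)).
  { rewrite Hh. unfold z. extensionality i. unfold vadd, vscale, vsub. ring. }
  unfold block_model, block_target.
  rewrite Hzh, mv_scale, !dot_scale_r, vnorm_scale, Rabs_right by lra.
  assert (Lhat / 2 * (t * vnorm (vsub w s)) ^ 2 <= c / 2 * vnorm (vsub w s) ^ 2).
  { rewrite Rpow_mult_distr.
    replace (Lhat / 2 * (t ^ 2 * vnorm (vsub w s) ^ 2))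
      with ((Lhat * t ^ 2) / 2 * vnorm (vsub w s) ^ 2) by field.
    apply Rmult_le_compat_r; [apply pow2_ge_0 | lra]. }
  lra.
Qed.

Lemma step_condition k t a c L : t <> 0 -> k / t ^ 2 * a * c >= L -> L * t ^ 2 <= k * a * c.
Proof.
  intros Ht H. assert (Ht2 : 0 < t ^ 2) by (rewrite <- Rsqr_pow2; apply Rsqr_pos_lt; auto).
  apply Rge_le, Rmult_le_compat_r with (r := t ^ 2) in H; [|lra].
  replace (k / t ^ 2 * a * c * t ^ 2) with (k * a * c) in H by (field; lra). lra.
Qed.


Theorem mainTheorem4
  (n1 n2 m : nat)
  (X1 : vec n1 -> Prop) (X2 : vec n2 -> Prop)
  (phi1 : vec n1 -> R) (phi2 : vec n2 -> R)
  (grad1 : vec n1 -> vec n1) (grad2 : vec n2 -> vec n2)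
  (Lphi1 Lphi2 : R)
  (A1 : mat m n1) (A2 : mat m n2) (b : vec m)
  (p1 : vec n1 -> R) (p2 : vec n2 -> R) (sigma1 sigma2 : R)
  (beta1 beta2 tau : R)
  (xbar : vec n1 * vec n2) (ybar : vec m)
  (HX1 : vnonempty X1 /\ vclosed X1 /\ vconvex_set X1 /\ vbounded X1)
  (HX2 : vnonempty X2 /\ vclosed X2 /\ vconvex_set X2 /\ vbounded X2)
  (Hphi1 : convex_fun phi1) (Hphi2 : convex_fun phi2)
  (Hs1 : sigma1 > 0) (Hs2 : sigma2 > 0)
  (Hp1 : prox_function X1 sigma1 p1) (Hp2 : prox_function X2 sigma2 p2)
  (Hg1 : is_gradient phi1 grad1) (Hg2 : is_gradient phi2 grad2)
  (HL1 : Lphi1 >= 0) (HL2 : Lphi2 >= 0)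
  (Hlip1 : lipschitz grad1 Lphi1) (Hlip2 : lipschitz grad2 Lphi2)
  (Hb1 : beta1 > 0) (Hb2 : beta2 > 0) (Htau : 0 < tau < 1)
  (Hxbar : Xprod X1 X2 xbar)
  (Hgap : ffun phi1 phi2 A1 A2 b xbar beta2 <= dfun X1 X2 phi1 phi2 A1 A2 b p1 p2 ybar beta1)
  (Hcond1 : (1 - tau) / tau ^ 2 * beta1 * sigma1 >=
            Lphi1 + 2 * (opnorm A1) ^ 2 / ((1 - tau) * beta2))
  (Hcond2 : (1 - tau) / tau ^ 2 * beta1 * sigma2 >=
            Lphi2 + 2 * (opnorm A2) ^ 2 / ((1 - tau) * beta2)) :
  let beta1p := (1 - tau) * beta1 in
  let beta2p := (1 - tau) * beta2 in
  let xs := xstar X1 X2 phi1 phi2 A1 A2 b p1 p2 ybar beta1 in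
  let xhat := (vadd (vscale (1 - tau) (fst xbar)) (vscale tau (fst xs)),
               vadd (vscale (1 - tau) (snd xbar)) (vscale tau (snd xs))) in
  let ys := ystar A1 A2 b xhat beta2p in
  let ybarp := vadd (vscale (1 - tau) ybar) (vscale tau ys) in
  let Lhat1 := Lphi1 + 2 * (opnorm A1) ^ 2 / beta2p in
  let Lhat2 := Lphi2 + 2 * (opnorm A2) ^ 2 / beta2p in
  let xplus := (Gblock X1 grad1 A1 Lhat1 ys (fst xhat),
                Gblock X2 grad2 A2 Lhat2 ys (snd xhat)) in
  Xprod X1 X2 xplus /\
  ffun phi1 phi2 A1 A2 b xplus beta2p <= dfun X1 X2 phi1 phi2 A1 A2 b p1 p2 ybarp beta1p.
Proof.
  intros beta1p beta2p xs xhat ys ybarp Lhat1 Lhat2 xplus.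
  destruct Hxbar as [Ha1 Ha2].
  destruct (xstar_spec X1 X2 phi1 phi2 grad1 grad2 A1 A2 b p1 p2 sigma1 sigma2 ybar beta1
              HX1 HX2 Hp1 Hp2 Hg1 Hg2) as [Hxs Hmin].
  set (w := xstar X1 X2 phi1 phi2 A1 A2 b p1 p2 ybarp beta1p).
  destruct (xstar_spec X1 X2 phi1 phi2 grad1 grad2 A1 A2 b p1 p2 sigma1 sigma2 ybarp beta1p
              HX1 HX2 Hp1 Hp2 Hg1 Hg2) as [[Hw1 Hw2] _].
  split.
  { split; [exact (proj1 (Gblock_spec X1 grad1 A1 Lhat1 ys (fst xhat) HX1))
          |exact (proj1 (Gblock_spec X2 grad2 A2 Lhat2 ys (snd xhat) HX2))]. }
  assert (Hb2p : 0 < beta2p) by (unfold beta2p; nra).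
  (* primal side: f(xplus; beta2+) is below the model at xhat *)
  eapply Rle_trans.
  { apply (smooth_upper_model phi1 phi2 grad1 grad2 Lphi1 Lphi2 A1 A2 b beta2p Lhat1 Lhat2 xhat
             _ _ ys Hg1 Hg2 Hlip1 Hlip2 Hb2p (Rle_refl _) (Rle_refl _) eq_refl). }
  (* each block model at G_i is below its target, by the step-size condition *)
  pose proof (block_step X1 grad1 A1 Lhat1 ys (fst xbar) (fst xs) (fst w) (fst xhat) tau
    ((1 - tau) * beta1 * sigma1) HX1 Ha1 Hw1 ltac:(lra) eq_refl
    (step_condition _ _ _ _ _ (Rgt_not_eq _ _ (proj1 Htau)) Hcond1)) as Hstep1.
  pose proof (block_step X2 grad2 A2 Lhat2 ys (snd xbar) (snd xs) (snd w) (snd xhat) tau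
    ((1 - tau) * beta1 * sigma2) HX2 Ha2 Hw2 ltac:(lra) eq_refl
    (step_condition _ _ _ _ _ (Rgt_not_eq _ _ (proj1 Htau)) Hcond2)) as Hstep2.
  (* dual side: d(ybar+; beta1+) is above the model plus the targets *)
  pose proof (dual_lower_bound X1 X2 phi1 phi2 grad1 grad2 A1 A2 b p1 p2 sigma1 sigma2
    beta1 beta2 tau xbar xs xhat w ybar ys ybarp beta1p beta2p
    (proj1 (proj2 (proj2 HX1))) (proj1 (proj2 (proj2 HX2))) Hphi1 Hphi2 Hg1 Hg2
    (proj1 (proj2 Hp1)) (proj1 (proj2 Hp2)) Hb1 Hb2 Htau Hxs Hmin Hgap
    eq_refl eq_refl eq_refl eq_refl eq_refl (conj Hw1 Hw2)) as Hlower.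
  unfold dfun. fold w. lra.
Qed.
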